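(* Let $p$ be the POP of length 4 defined by the relations $1>2$ and $1>4$ (label $3$ isolated), and let $a(n)=|S_n(p)|$. Then $$\sum_{n\geq 0}a(n)x^n=\frac{(1-x)^2}{1-3x+2x^2-2x^3}.$$
   Context: An $n$-permutation is a word $\pi=\pi_1\cdots\pi_n$ containing each of $1,\ldots,n$ exactly once; $S_n$ is the set of $n$-permutations ($S_0$ consists of the empty permutation). A partially ordered pattern (POP) $p$ of length $k$ is a partial order on the label set $\{1,\ldots,k\}$; it is described by a set of generating relations, where a relation $x>y$ means that in an occurrence the entry in the $x$-th chosen position must be larger than the entry in the $y$-th chosen position, and labels not involved in any relation are unconstrained. An $n$-permutation $\pi$ contains $p$ if there are indices $1\leq i_1<\cdots<i_k\leq n$ such that $\pi_{i_x}>\pi_{i_y}$ whenever $x>y$ in the partial order; otherwise $\pi$ avoids $p$. $S_n(p)$ denotes the set of $n$-permutations avoiding $p$. *)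

From HB Require Import structures.
From mathcomp Require Import all_boot all_order all_algebra all_fingroup.
Set Implicit Arguments. Unset Strict Implicit. Unset Printing Implicit Defensive.
Import GRing.Theory.
Local Open Scope ring_scope.

(* An n-permutation pi = pi_1 ... pi_n is represented by s : {perm 'I_n},
   with pi_{i+1} = s i + 1 (0-based positions and values). *)

Definition contains_pop1214 (n : nat) (s : {perm 'I_n}) : bool :=
  [exists i1 : 'I_n, exists i2 : 'I_n, exists i3 : 'I_n, exists i4 : 'I_n,
     [&& (i1 < i2)%N, (i2 < i3)%N, (i3 < i4)%N,
         (s i2 < s i1)%N & (s i4 < s i1)%N]].

Definition a_pop (n : nat) : nat :=
  #|[set s : {perm 'I_n} | ~~ contains_pop1214 s]|.

(* The generating function sum_n a(n) x^n as a formal power series over int,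
   represented by its coefficient sequence. *)
Definition gf_a : nat -> int := fun n => Posz (a_pop n).

Definition num_poly : {poly int} := ('X - 1) ^+ 2.
Definition den_poly : {poly int} := 1 - 3%:R *: 'X + 2%:R *: 'X^2 - 2%:R *: 'X^3.

Definition fps_mul_poly_coef (f : nat -> int) (q : {poly int}) (n : nat) : int :=
  \sum_(k < n.+1) f k * q`_(n - k).

From HB Require Import structures.
From mathcomp Require Import all_boot all_order all_algebra all_fingroup.
From mathcomp Require Import zify.
Set Implicit Arguments. Unset Strict Implicit. Unset Printing Implicit Defensive.

(* Decompose an (n+1)-permutation by its first value v followed by the
   standardisation t of the remaining entries.  The first entry can only play
   the role of label 1, and it does so exactly when two entries smaller than v
   occur in t at positions at distance >= 2 ("gapped").  Any three values are
   gapped, so v is one of the three smallest values: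
   - v in {1, 2}: pi avoids p iff t does;
   - v = 3: pi avoids p iff t avoids p and the values 1, 2 are adjacent in t.
   Hence a(n+1) = 2 a(n) + b(n) for n >= 2, where b(n) counts avoiders with
   1 and 2 adjacent.  The same decomposition for b gives
   b(n+1) = 2 a(n-1) + b(n) for n >= 2 (for v in {1, 2} the other small value
   must come second).  Eliminating b yields the linear recurrence
   a(n+3) = 3 a(n+2) - 2 a(n+1) + 2 a(n) (the base case uses b(2) = 2).
   Together with a(n) = n! for n < 3 this is exactly the coefficientwise
   statement (sum_n a(n) x^n) (1 - 3x + 2x^2 - 2x^3) = (1 - x)^2. *)

Definition nperms n (P : pred {perm 'I_n}) : nat := \sum_(s : {perm 'I_n}) P s.

Lemma nperms_all n (P : pred {perm 'I_n}) : P =1 predT -> nperms P = n`!.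
Proof.
move=> allP; rewrite /nperms (eq_bigr (fun=> 1)) => [|s _]; last by rewrite allP.
by rewrite sum1_card card_Sn.
Qed.

Lemma eq_nperms n (P Q : pred {perm 'I_n}) : P =1 Q -> nperms P = nperms Q.
Proof. by move=> PQ; apply: eq_bigr => s _; rewrite PQ. Qed.

Lemma nperms0 n (P : pred {perm 'I_n}) : P =1 pred0 -> nperms P = 0.
Proof. by move=> P0; rewrite /nperms big1 // => s _; rewrite P0. Qed.

(* pcons v t is the permutation with first value v whose remaining entries
   are in the relative order given by t. *)
Definition pcons n (v : 'I_n.+1) (t : {perm 'I_n}) : {perm 'I_n.+1} :=
  lift_perm ord0 v t.

Lemma pcons_first n (v : 'I_n.+1) t : pcons v t ord0 = v.
Proof. exact: lift_perm_id. Qed.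

Lemma pcons_lift n (v : 'I_n.+1) t k : pcons v t (lift ord0 k) = lift v (t k).
Proof. exact: lift_perm_lift. Qed.

Lemma pcons_bij n : bijective (fun vt : 'I_n.+1 * {perm 'I_n} => pcons vt.1 vt.2).
Proof.
apply: inj_card_bij; last by rewrite card_prod card_ord !card_Sn factS.
move=> [v1 t1] [v2 t2] /= E.
have Ev : v1 = v2 by rewrite -(pcons_first v1 t1) E pcons_first.
subst v2; congr (_, _); apply/permP => k; apply: (@lift_inj _ v1).
by rewrite -!pcons_lift E.
Qed.

Lemma nperms_pcons n (P : pred {perm 'I_n.+1}) :
  nperms P = \sum_(v < n.+1) nperms (fun t => P (pcons v t)).
Proof.
rewrite /nperms pair_bigA /= (reindex _ (onW_bij _ (pcons_bij n))).
by apply: eq_bigr => -[v t].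
Qed.

Definition gapped n (P : pred 'I_n) : bool :=
  [exists k2 : 'I_n, exists k4 : 'I_n, [&& k2.+1 < k4, P k2 & P k4]].

Lemma eq_gapped n (P Q : pred 'I_n) : P =1 Q -> gapped P = gapped Q.
Proof.
by move=> PQ; apply: eq_existsb => k2; apply: eq_existsb => k4; rewrite !PQ.
Qed.

Lemma gapped_near n (P : pred 'I_n) i j :
  ~~ gapped P -> P i -> P j -> i <= j.+1.
Proof.
move=> ngap Pi Pj; rewrite leqNgt; apply: contra ngap => lt_ji.
by apply/existsP; exists j; apply/existsP; exists i; rewrite lt_ji Pi Pj.
Qed.

(* Three distinct positions cannot be pairwise adjacent. *)
Lemma gapped_three n (P : pred 'I_n) i j k :
  P i -> P j -> P k -> uniq [:: i; j; k] -> gapped P.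
Proof.
move=> Pi Pj Pk; rewrite /= !inE negb_or -!(inj_eq val_inj) /= andbT.
move=> /andP [/andP [ij ik] jk]; apply: contraT => ngap.
have := gapped_near ngap Pi Pj; have := gapped_near ngap Pj Pi.
have := gapped_near ngap Pi Pk; have := gapped_near ngap Pk Pi.
have := gapped_near ngap Pj Pk; have := gapped_near ngap Pk Pj.
lia.
Qed.

Lemma existsS n (P : pred 'I_n.+1) :
  [exists i, P i] = P ord0 || [exists i : 'I_n, P (lift ord0 i)].
Proof.
apply/existsP/orP => [[i]|[P0|/existsP [i Pi]]]; last 2 first.
- by exists ord0.
- by exists (lift ord0 i).
by case: (unliftP ord0 i) => [j ->|->] Pi; [right; apply/existsP; exists j | left].
Qed.

Lemma gappedS n (P : pred 'I_n.+1) :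
  gapped P = (P ord0 && [exists k : 'I_n, (0 < k) && P (lift ord0 k)])
             || gapped (fun k => P (lift ord0 k)).
Proof.
rewrite /gapped existsS; congr orb.
  rewrite existsS /=; case: (P ord0); last by apply/existsP => -[k /and3P []].
  by apply: eq_existsb.
by apply: eq_existsb => k2; rewrite existsS.
Qed.

Definition later_smaller n (s : {perm 'I_n}) (i : 'I_n) : pred 'I_n :=
  fun j => (i < j) && (s j < s i).

(* s contains p iff some entry (label 1) has two later smaller entries
   (labels 2 and 4) with room for label 3 between them. *)
Lemma containsE n (s : {perm 'I_n}) :
  contains_pop1214 s = [exists i1, gapped (later_smaller s i1)].
Proof.
apply: eq_existsb => i1; apply/existsP/existsP => -[i2].
  move=> /existsP [i3 /existsP [i4 /and5P [lt12 lt23 lt34 lt21 lt41]]].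
  by exists i2; apply/existsP; exists i4; rewrite /later_smaller lt12 lt21 lt41 /=; lia.
case/existsP=> i4 /and3P [lt24 /andP [lt12 lt21] /andP [_ lt41]].
have lt3n : (i2.+1 < n) by have := ltn_ord i4; lia.
exists i2; apply/existsP; exists (Ordinal lt3n); apply/existsP; exists i4.
by rewrite /= lt12 lt21 lt41 lt24 leqnn.
Qed.

Lemma lift_ltn n (v : 'I_n.+1) (x y : 'I_n) : (lift v x < lift v y) = (x < y).
Proof. by rewrite /= /bump; case: (leqP v x); case: (leqP v y) => /= ? ?; lia. Qed.

Lemma lift_lt n (v : 'I_n.+1) (x : 'I_n) w : (lift v x < w) = (x < w - (v < w)).
Proof. by rewrite /= /bump; case: (leqP v x); case: (ltnP v w) => /= ? ?; lia. Qed.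

Definition below n (t : {perm 'I_n}) (v : nat) : pred 'I_n := fun k => t k < v.

(* Occurrences of p in pcons v t either use the first entry as label 1 or
   lie entirely in t. *)
Lemma contains_pcons n (v : 'I_n.+1) (t : {perm 'I_n}) :
  contains_pop1214 (pcons v t) = gapped (below t v) || contains_pop1214 t.
Proof.
rewrite !containsE existsS; congr orb.
  rewrite gappedS /later_smaller ltnn /=; apply: eq_gapped => k.
  by rewrite pcons_lift pcons_first lift_lt ltnn subn0.
apply: eq_existsb => i; rewrite gappedS /later_smaller /=.
by apply: eq_gapped => k; rewrite !pcons_lift lift_ltn.
Qed.

(* At most one value below v: never gapped. *)
Lemma gapped_below_small n (t : {perm 'I_n}) v : v <= 1 -> gapped (below t v) = false.
Proof.
move=> le_v1; apply/existsP => -[k2 /existsP [k4 /and3P [lt24 lt2 lt4]]].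
have eq24 : t k2 = t k4 by apply: val_inj; move: lt2 lt4; rewrite /below /=; lia.
by move: lt24; rewrite (perm_inj eq24); lia.
Qed.

(* At least three values below v: always gapped. *)
Lemma gapped_below_large n (t : {perm 'I_n}) v :
  3 <= v -> v <= n -> gapped (below t v).
Proof.
move=> ge3 le_vn; have lt0n : (0 < n) by lia.
have lt1n : (1 < n) by lia.
have lt2n : (2 < n) by lia.
pose pos (x : 'I_n) := (t^-1)%g x.
apply: (@gapped_three _ _ (pos (Ordinal lt0n)) (pos (Ordinal lt1n)) (pos (Ordinal lt2n))).
- by rewrite /below /pos permKV /=; lia.
- by rewrite /below /pos permKV /=; lia.
- by rewrite /below /pos permKV /=; lia.
rewrite -[[:: _; _; _]]/(map pos [:: Ordinal lt0n; Ordinal lt1n; Ordinal lt2n]).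
by rewrite map_inj_uniq //; apply: perm_inj.
Qed.

(* a(n), and b(n): avoiders in which the two smallest values are adjacent. *)
Definition avoiders n := nperms (fun s : {perm 'I_n} => ~~ contains_pop1214 s).

Definition avoiders_adj n :=
  nperms (fun s : {perm 'I_n} => ~~ contains_pop1214 s && ~~ gapped (below s 2)).

Lemma a_popE n : a_pop n = avoiders n.
Proof.
rewrite /a_pop /avoiders /nperms -sum1_card big_mkcond /=.
by apply: eq_bigr => s _; rewrite inE; case: (~~ _).
Qed.

(* An occurrence of p needs four positions. *)
Lemma contains_short n (s : {perm 'I_n}) : n < 4 -> ~~ contains_pop1214 s.
Proof.
move=> lt_n4; apply/negP.
case/existsP=> i1 /existsP [i2 /existsP [i3 /existsP [i4 /and5P [? ? ? _ _]]]].
by have := ltn_ord i4; lia.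
Qed.

Lemma avoiders_short n : n < 4 -> avoiders n = n`!.
Proof. by move=> lt_n4; apply: nperms_all => s /=; rewrite contains_short. Qed.

Lemma avoiders_adj_short n : n < 3 -> avoiders_adj n = n`!.
Proof.
move=> lt_n3; apply: nperms_all => s /=; rewrite contains_short 1?ltnW //=.
by apply/negP => /existsP [k2 /existsP [k4 /and3P [? _ _]]]; have := ltn_ord k4; lia.
Qed.

Lemma avoid_pcons n (v : 'I_n.+1) (t : {perm 'I_n}) :
  ~~ contains_pop1214 (pcons v t) =
  if (v < 2) then ~~ contains_pop1214 t
  else if v == 2 :> nat then ~~ contains_pop1214 t && ~~ gapped (below t 2)
  else false.
Proof.
rewrite contains_pcons negb_or andbC.
case: ltnP => [lt_v2|ge_v2]; first by rewrite gapped_below_small ?andbT //; lia.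
case: eqP => [-> //|ne_v2].
by rewrite gapped_below_large ?andbF //; have := ltn_ord v; lia.
Qed.

Lemma avoiders_by_first n (v : 'I_n.+1) :
  nperms (fun t => ~~ contains_pop1214 (pcons v t)) =
  if (v < 2) then avoiders n else if v == 2 :> nat then avoiders_adj n else 0.
Proof.
rewrite (eq_nperms (avoid_pcons v)).
by case: ifP => _; [|case: ifP => _; last apply: nperms0].
Qed.

Lemma gapped_below_pcons n (v : 'I_n.+1) (t : {perm 'I_n}) w :
  gapped (below (pcons v t) w) =
  ((v < w) && [exists k : 'I_n, (0 < k) && (t k < w.-1)])
  || gapped (below t (w - (v < w))).
Proof.
rewrite gappedS /below pcons_first; congr orb.
  case: ltnP => //= lt_vw; apply: eq_existsb => k.
  by rewrite pcons_lift lift_lt lt_vw subn1.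
by apply: eq_gapped => k; rewrite pcons_lift lift_lt.
Qed.

Lemma no_late_zero m (t : {perm 'I_m.+1}) :
  ~~ [exists k : 'I_m.+1, (0 < k) && (t k < 1)] = (t ord0 == ord0).
Proof.
apply/negP/eqP => [no_late|t0 /existsP [k /andP [pos_k tk0]]].
  apply/eqP; apply: contraT => t0; case: no_late; apply/existsP.
  exists ((t^-1)%g ord0); rewrite permKV /= andbT lt0n; apply: contra t0 => /eqP t'0.
  by rewrite -[X in t X](_ : (t^-1)%g ord0 = ord0) ?permKV //; apply: val_inj.
have : t k = t ord0 by apply: val_inj; rewrite t0 /=; lia.
by move/perm_inj => k0; rewrite k0 in pos_k.
Qed.

Lemma avoid_adj_pcons m (v : 'I_m.+2) (t : {perm 'I_m.+1}) :
  ~~ contains_pop1214 (pcons v t) && ~~ gapped (below (pcons v t) 2) =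
  if (v < 2) then ~~ contains_pop1214 t && (t ord0 == ord0)
  else if v == 2 :> nat then ~~ contains_pop1214 t && ~~ gapped (below t 2)
  else false.
Proof.
rewrite avoid_pcons gapped_below_pcons; case: ltnP => [lt_v2|_] /=.
  by rewrite gapped_below_small // orbF no_late_zero.
by case: eqP => //= _; rewrite subn0 -andbA andbb.
Qed.

Lemma avoiders_fixing0 m :
  nperms (fun t : {perm 'I_m.+1} => ~~ contains_pop1214 t && (t ord0 == ord0)) =
  avoiders m.
Proof.
rewrite nperms_pcons big_ord_recl big1 => [|v _]; last first.
  by apply: nperms0 => u; rewrite pcons_first andbF.
rewrite addn0; apply: eq_nperms => u.
by rewrite pcons_first eqxx andbT contains_pcons gapped_below_small.
Qed.

Lemma avoiders_adj_by_first m (v : 'I_m.+2) :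
  nperms (fun t => ~~ contains_pop1214 (pcons v t) && ~~ gapped (below (pcons v t) 2)) =
  if (v < 2) then avoiders m else if v == 2 :> nat then avoiders_adj m.+1 else 0.
Proof.
rewrite (eq_nperms (avoid_adj_pcons v)).
case: ifP => _; first exact: avoiders_fixing0.
by case: ifP => _; last apply: nperms0.
Qed.

Lemma avoiders_rec m : avoiders m.+3 = 2 * avoiders m.+2 + avoiders_adj m.+2.
Proof.
rewrite {1}/avoiders nperms_pcons !big_ord_recl big1 => [|v _]; last first.
  by rewrite avoiders_by_first.
by rewrite !avoiders_by_first /=; lia.
Qed.

Lemma avoiders_adj_rec m :
  avoiders_adj m.+3 = 2 * avoiders m.+1 + avoiders_adj m.+2.
Proof.
rewrite {1}/avoiders_adj nperms_pcons !big_ord_recl big1 => [|v _]; last first.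
  by rewrite avoiders_adj_by_first.
by rewrite !avoiders_adj_by_first /=; lia.
Qed.

(* The linear recurrence encoded by the denominator 1 - 3x + 2x^2 - 2x^3. *)
Lemma avoiders_linrec m :
  avoiders m.+3 + 2 * avoiders m.+1 = 3 * avoiders m.+2 + 2 * avoiders m.
Proof.
case: m => [|m].
  by rewrite avoiders_rec !avoiders_short // avoiders_adj_short.
rewrite avoiders_rec avoiders_adj_rec (avoiders_rec m); lia.
Qed.

Import GRing.Theory.
Local Open Scope ring_scope.

Lemma fps_mul_poly_coefE (f : nat -> int) (q : {poly int}) n :
  fps_mul_poly_coef f q n = \sum_(i < n.+1) f (n - i)%N * q`_i.
Proof.
rewrite /fps_mul_poly_coef (reindex_inj rev_ord_inj) /=.
by apply: eq_bigr => i _; rewrite subSS subKn // -ltnS.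
Qed.

Lemma den_poly_coef i : den_poly`_i = [:: 1; -3; 2; -2]`_i.
Proof.
rewrite /den_poly !coefD !coefN !coefZ coef1 coefX !coefXn.
by case: i => [|[|[|[|i]]]]; rewrite /= ?nth_nil ?mulr0 ?mulr1 ?subr0 ?addr0 ?sub0r ?add0r.
Qed.

Lemma num_poly_coef i : num_poly`_i = [:: 1; -2; 1]`_i.
Proof.
rewrite /num_poly sqrrB expr1n mulr1 coefD coefB coefMn coefX coefXn coef1.
by case: i => [|[|[|i]]]; rewrite /= ?nth_nil.
Qed.

Lemma fps_mul_den_coef (f : nat -> int) m :
  fps_mul_poly_coef f den_poly m.+3 = f m.+3 - 3 * f m.+2 + 2 * f m.+1 - 2 * f m.
Proof.
rewrite fps_mul_poly_coefE !big_ord_recl big1 => [|i _]; last first.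
  by rewrite den_poly_coef /= nth_nil mulr0.
rewrite !den_poly_coef /= !subSS !subn0; lia.
Qed.

Theorem theorem3p8 :
  forall n : nat, fps_mul_poly_coef gf_a den_poly n = num_poly`_n.
Proof.
move=> n; rewrite num_poly_coef.
case: n => [|[|[|m]]]; last first.
  by rewrite fps_mul_den_coef /gf_a !a_popE /= nth_nil; have := avoiders_linrec m; lia.
all: rewrite fps_mul_poly_coefE !big_ord_recl big_ord0 !den_poly_coef.
all: by rewrite /gf_a !a_popE !avoiders_short.
Qed.
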